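(* Let $\mathbb{F}_q$ be a finite field with $\mathrm{char}(\mathbb{F}_q)>3$ and $3\mid q-1$, let $C$ be the subgroup of cubes in $\mathbb{F}_q^\times$ (of index $3$), and let $z\in\mathbb{F}_q^\times\setminus C$. Let $a,b\in\mathbb{F}_q^\times$. (1) If $a$ and $b$ lie in the same coset of $C$, then $J_3(a,b)$ is conjugate to $J_3(1,1)$. (2) If $a$ and $b$ lie in different cosets of $C$, then $J_3(a,b)$ is conjugate to $J_3(1,z)$ or to $J_3(1,z^2)$.
   Context: $\mathfrak{sl}_3(\mathbb{F}_q)$ is the Lie algebra of $3\times3$ traceless matrices over $\mathbb{F}_q$. Fix a primitive cube root of unity $u\in\mathbb{F}_q$. For nonzero $a,b\in\mathbb{F}_q$, $J_3(a,b)$ denotes the decomposition $\mathfrak{sl}_3(\mathbb{F}_q)=H_0\oplus H_1\oplus H_2\oplus H_3$, where $H_0$ is the subalgebra of traceless diagonal matrices and, for $j=1,2,3$ with $(\lambda_j,\mu_j)=(1,1),(u,u^2),(u^2,u)$ respectively, $H_j=\left\langle \begin{pmatrix}0&1&0\\0&0&\lambda_j a\\ \mu_j ab&0&0\end{pmatrix},\begin{pmatrix}0&0&1\\ \mu_j ab&0&0\\0&\lambda_j b&0\end{pmatrix}\right\rangle_{\mathbb{F}_q}$. (Such a decomposition is called a $J_3$-decomposition.) Two such decompositions are conjugate if there is a Lie algebra automorphism of $\mathfrak{sl}_3(\mathbb{F}_q)$ mapping each component of the first onto exactly one component of the second. *)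

From HB Require Import structures.
From mathcomp Require Import all_boot all_order all_algebra all_fingroup all_field.
Set Implicit Arguments. Unset Strict Implicit. Unset Printing Implicit Defensive.
Import Order.TTheory GRing.Theory.
Local Open Scope ring_scope.

Section J3.
Variable F : finFieldType.

Definition mx3 (a00 a01 a02 a10 a11 a12 a20 a21 a22 : F) : 'M[F]_3 :=
  \matrix_(i < 3, j < 3)
    nth 0 (nth [::] [:: [:: a00; a01; a02]; [:: a10; a11; a12]; [:: a20; a21; a22]] i) j.

Definition sl3 : {set 'M[F]_3} := [set A | \tr A == 0].

Definition lie (A B : 'M[F]_3) : 'M[F]_3 := A *m B - B *m A.

Definition span2 (A B : 'M[F]_3) : {set 'M[F]_3} :=
  [set x *: A + y *: B | x : F, y : F].

Definition H0 : {set 'M[F]_3} := [set A | is_diag_mx A && (\tr A == 0)].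

Definition lam_mu (u : F) (j : nat) : F * F :=
  match j with
  | 1 => (1, 1)
  | 2 => (u, u ^+ 2)
  | _ => (u ^+ 2, u)
  end.

Definition J3 (u a b : F) (j : 'I_4) : {set 'M[F]_3} :=
  if (j : nat) == 0%N then H0 else
  let l := (lam_mu u j).1 in let m := (lam_mu u j).2 in
  span2 (mx3 0 1 0   0 0 (l * a)   (m * a * b) 0 0)
        (mx3 0 0 1   (m * a * b) 0 0   0 (l * b) 0).

(* Lie algebra automorphism of sl_3(F) (phi considered on sl3 only) *)
Definition sl3_aut (phi : 'M[F]_3 -> 'M[F]_3) : Prop :=
  [/\ {in sl3, forall A, phi A \in sl3},
      {in sl3 &, forall A B, forall x : F, phi (x *: A + B) = x *: phi A + phi B},
      {in sl3 &, injective phi},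
      {in sl3, forall B, exists2 A, A \in sl3 & phi A = B} &
      {in sl3 &, forall A B, phi (lie A B) = lie (phi A) (phi B)}].

Definition conj_decomp (H H' : 'I_4 -> {set 'M[F]_3}) : Prop :=
  exists phi, sl3_aut phi /\
    exists sigma : 'I_4 -> 'I_4, forall i, phi @: H i = H' (sigma i).

Definition cubes : {set F} := [set x | [exists w, (w != 0) && (x == w ^+ 3)]].
Definition cube_coset (a : F) : {set F} := [set a * c | c in cubes].

End J3.

(* Conjugating by the diagonal matrix diag(1, y, a y^2) fixes H_0 pointwise and
   rescales the two generators of every H_j, so it maps J_3(a,b) componentwise onto
   J_3(1, a^2 b y^3).  Hence J_3(a,b) is conjugate to J_3(1,t) as soon as t and
   a^2 b = a^3 (b/a) differ by a cube.  As F_q^x is cyclic, the class of b/a modulo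
   cubes is trivial when a and b share a coset, and is the class of z or of z^2
   otherwise. *)

From mathcomp Require Import all_boot all_algebra all_field.
From mathcomp Require Import cyclic ring zify.
Set Implicit Arguments.
Unset Strict Implicit.
Unset Printing Implicit Defensive.
Import GRing.Theory.
Local Open Scope ring_scope.

Section Conjugation.
Variable F : finFieldType.
Implicit Types (P X A B : 'M[F]_3).

Lemma conjmx_sl3_aut P : P \in unitmx -> sl3_aut (conjmx P).
Proof.
move=> uP; have conjE := conjumx _ uP.
split.
- move=> A; rewrite !inE conjE => /eqP trA.
  by rewrite mxtrace_mulC mulmxA mulVmx // mul1mx trA.
- by move=> A B _ _ x; rewrite !conjE mulmxDr mulmxDl -scalemxAr -scalemxAl.
- by move=> A B _ _ /(congr1 (conjmx (invmx P))); rewrite !conjmxK.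
- move=> B sB; exists (conjmx (invmx P) B); last exact: conjmxVK.
  by move: sB; rewrite !inE conjVmx // mxtrace_mulC mulmxA mulmxV // mul1mx.
- move=> A B _ _; rewrite /lie -!conjmxM ?inE ?stablemx_unit //.
  by rewrite !conjE mulmxBr mulmxBl.
Qed.

Lemma conjmx_span2 P A B : conjmx P @: span2 A B = span2 (conjmx P A) (conjmx P B).
Proof.
have lin x y X Y : conjmx P (x *: X + y *: Y) = x *: conjmx P X + y *: conjmx P Y.
  by rewrite /conjmx mulmxDr mulmxDl -!scalemxAr -!scalemxAl.
apply/setP=> X; apply/imsetP/imset2P => [[_ /imset2P[x y _ _ ->] ->]|[x y _ _ ->]].
  by exists x y; rewrite ?inE ?lin.
by exists (x *: A + y *: B); [apply/imset2P; exists x y | rewrite lin].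
Qed.

Lemma span2_scale A B c d : c != 0 -> d != 0 -> span2 (c *: A) (d *: B) = span2 A B.
Proof.
move=> c0 d0; apply/setP=> X; apply/imset2P/imset2P => -[x y _ _ ->].
  by exists (x * c) (y * d); rewrite ?inE ?scalerA.
by exists (x / c) (y / d); rewrite ?inE ?scalerA ?divfK.
Qed.
End Conjugation.

Section DiagonalConjugation.
Variables (F : fieldType) (n : nat) (d : 'rV[F]_n).
Hypothesis d_neq0 : forall k, d 0 k != 0.

Lemma diag_mx_unit : diag_mx d \in unitmx.
Proof. by rewrite unitmxE det_diag unitfE; apply/prodf_neq0 => k _. Qed.

Lemma conjmx_diag_mxE (X : 'M[F]_n) i j :
  conjmx (diag_mx d) X i j = d 0 i * X i j / d 0 j.
Proof.
have /matrixP/(_ i j) := mulmxKV diag_mx_unit (diag_mx d *m X).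
by rewrite -conjumx ?diag_mx_unit // mul_mx_diag mul_diag_mx !mxE => <-; rewrite mulfK.
Qed.

Lemma conjmx_diag_id (X : 'M[F]_n) : is_diag_mx X -> conjmx (diag_mx d) X = X.
Proof.
case/diag_mxP=> e ->.
by rewrite conjumx ?diag_mx_unit // diag_mx_comm mulmxK ?diag_mx_unit.
Qed.
End DiagonalConjugation.

Section J3Conjugation.
Variable F : finFieldType.

Definition diag3 (y w : F) : 'M[F]_3 := diag_mx (\row_i [:: 1; y; w]`_i).

Lemma diag3_neq0 {y w : F} : y != 0 -> w != 0 ->
  forall k, (\row_(i < 3) [:: 1; y; w]`_i) 0 k != 0.
Proof. by move=> y0 w0 [[|[|[|k]]] hk]; rewrite mxE //= oner_neq0. Qed.

Lemma conjmx_J3_span (a b y l m : F) : a != 0 -> y != 0 ->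
  let t := a ^+ 2 * b * y ^+ 3 in
  conjmx (diag3 y (a * y ^+ 2)) @:
    span2 (mx3 0 1 0   0 0 (l * a)   (m * a * b) 0 0)
          (mx3 0 0 1   (m * a * b) 0 0   0 (l * b) 0)
  = span2 (mx3 0 1 0   0 0 (l * 1)   (m * 1 * t) 0 0)
          (mx3 0 0 1   (m * 1 * t) 0 0   0 (l * t) 0).
Proof.
move=> a0 y0 t; have w0 : a * y ^+ 2 != 0 by rewrite mulf_neq0 ?expf_neq0.
rewrite conjmx_span2 -[RHS](@span2_scale _ _ _ y^-1 (a * y ^+ 2)^-1) ?invr_neq0 //.
congr span2; apply/matrixP=> i j;
  rewrite (conjmx_diag_mxE (diag3_neq0 y0 w0)) /mx3 !mxE;
  case: i => [[|[|[|i]]] hi] //; case: j => [[|[|[|j]]] hj] //=.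
all: rewrite /t ?(mul0r, mulr0, mul1r, mulr1, invr1) //; by field; rewrite ?a0 ?y0.
Qed.

Lemma J3_conj_cube (u a b c : F) : a != 0 -> c \in cubes F ->
  conj_decomp (J3 u a b) (J3 u 1 (a ^+ 2 * b * c)).
Proof.
move=> a0; rewrite inE => /existsP[y /andP[y0 /eqP ->]].
have w0 : a * y ^+ 2 != 0 by rewrite mulf_neq0 ?expf_neq0.
exists (conjmx (diag3 y (a * y ^+ 2))); split.
  by apply/conjmx_sl3_aut/diag_mx_unit/diag3_neq0.
exists id => j; rewrite /J3 /=; case: ifP => _; last exact: conjmx_J3_span.
rewrite -[RHS]imset_id; apply: eq_in_imset => X; rewrite inE => /andP[dX _].
exact/conjmx_diag_id/dX/diag3_neq0.
Qed.
End J3Conjugation.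

Section Cubes.
Variable F : finFieldType.
Implicit Types a b s t x z : F.

Lemma cubesP x : reflect (exists2 w, w != 0 & x = w ^+ 3) (x \in cubes F).
Proof.
rewrite inE; apply: (iffP existsP) => [[w /andP[w0 /eqP->]]|[w w0 ->]].
  by exists w.
by exists w; rewrite w0 eqxx.
Qed.

Lemma cubes_expr3 w : w != 0 -> w ^+ 3 \in cubes F.
Proof. by move=> w0; apply/cubesP; exists w. Qed.

Lemma cubesM x y : x \in cubes F -> y \in cubes F -> x * y \in cubes F.
Proof.
move=> /cubesP[v v0 ->] /cubesP[w w0 ->].
by rewrite -exprMn cubes_expr3 ?mulf_neq0.
Qed.

Lemma cubesV x : x \in cubes F -> x^-1 \in cubes F.
Proof. by move=> /cubesP[w w0 ->]; rewrite -exprVn cubes_expr3 ?invr_neq0. Qed.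

Lemma cube_cosetMr a s : s \in cubes F -> cube_coset (a * s) = cube_coset a.
Proof.
move=> Cs; have s0 : s != 0 by case/cubesP: Cs => w w0 ->; rewrite expf_neq0.
apply/setP=> x; apply/imsetP/imsetP => -[c Cc ->].
  by exists (s * c); rewrite ?cubesM ?mulrA.
exists (s^-1 * c); first by rewrite cubesM ?cubesV.
by rewrite mulrA mulfK.
Qed.

Lemma cube_coset_eq a b : b != 0 -> cube_coset a = cube_coset b <-> a / b \in cubes F.
Proof.
move=> b0; split=> [Eab | Cab]; last by rewrite -(cube_cosetMr b Cab) mulrC divfK.
have C1 : 1 \in cubes F by rewrite -(expr1n _ 3) cubes_expr3 ?oner_neq0.
have : a \in cube_coset b by rewrite -Eab; apply/imsetP; exists 1; rewrite ?mulr1.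
by case/imsetP=> c Cc ->; rewrite [b * c]mulrC mulfK.
Qed.

Lemma finField_generator :
  exists2 g : F, g != 0 & forall x, x != 0 -> exists k, x = g ^+ k.
Proof.
have unity_card x : x != 0 -> x ^+ #|F|.-1 = 1.
  move=> x0; apply: (mulfI x0); rewrite mulr1 -exprS prednK ?expf_card //.
  by apply/card_gt0P; exists 0.
have q1_gt0 : (0 < #|F|.-1)%N.
  by rewrite -(cardC1 (0 : F)); apply/card_gt0P; exists 1; rewrite !inE oner_neq0.
have : has (#|F|.-1).-primitive_root (enum (predC1 (0 : F))).
  apply: has_prim_root; rewrite ?enum_uniq -?cardE ?cardC1 //.
  by apply/allP=> x; rewrite mem_enum !inE unity_rootE => /unity_card ->.
case/hasP=> g; rewrite mem_enum !inE => g0 prim_g; exists g => // x x0.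
by case: (prim_rootP prim_g (unity_card x x0)) => k ->; exists k.
Qed.

Lemma noncubes_mul t z : t != 0 -> z != 0 -> t \notin cubes F -> z \notin cubes F ->
  z * t \in cubes F \/ z ^+ 2 * t \in cubes F.
Proof.
move=> t0 z0 Nt Nz; have [g g0 genF] := finField_generator.
have cube_g k : (3 %| k)%N -> g ^+ k \in cubes F.
  by move=> /divnK <-; rewrite exprM cubes_expr3 ?expf_neq0.
have [i Eti] := genF t t0; have [j Ezj] := genF z z0.
have Ni : ~~ (3 %| i)%N by apply: contra Nt; rewrite Eti; apply: cube_g.
have Nj : ~~ (3 %| j)%N by apply: contra Nz; rewrite Ezj; apply: cube_g.
rewrite Eti Ezj -!exprM -!exprD.
have [/cube_g C | /cube_g C] : (3 %| j + i)%N \/ (3 %| j * 2 + i)%N by lia.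
  by left.
by right.
Qed.
End Cubes.

Lemma J3_conj_quot (F : finFieldType) (u a b t : F) : a != 0 -> b != 0 ->
  t * (a / b) \in cubes F -> conj_decomp (J3 u a b) (J3 u 1 t).
Proof.
move=> a0 b0 Ct; have -> : t = a ^+ 2 * b * (t * (a / b) * a^-1 ^+ 3).
  by field; rewrite a0 b0.
by apply: J3_conj_cube; rewrite // cubesM ?cubes_expr3 ?invr_neq0.
Qed.

Theorem proposition3p10 (F : finFieldType) (u z a b : F) :
  (forall p, p \in [pchar F] -> (3 < p)%N) ->
  (3 %| #|F|.-1)%N ->
  3.-primitive_root u ->
  z != 0 -> z \notin cubes F ->
  a != 0 -> b != 0 ->
  (cube_coset a = cube_coset b ->
     conj_decomp (J3 u a b) (J3 u 1 1)) /\
  (cube_coset a != cube_coset b ->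
     conj_decomp (J3 u a b) (J3 u 1 z) \/ conj_decomp (J3 u a b) (J3 u 1 (z ^+ 2))).
Proof.
(* The conjugation fixes the index of every component whatever u is, and if 3 did
   not divide q - 1 every element would be a cube. *)
move=> _ _ _ z0 Nz a0 b0; split=> [/(cube_coset_eq _ b0) Cab | /eqP NEab].
  by apply: J3_conj_quot; rewrite ?mul1r.
have Nab : a / b \notin cubes F by apply/negP => /(cube_coset_eq _ b0).
have ab0 : a / b != 0 by rewrite mulf_neq0 ?invr_neq0.
case: (noncubes_mul ab0 z0 Nab Nz) => C.
- left; exact: (J3_conj_quot u a0 b0 C).
- right; exact: (J3_conj_quot u a0 b0 C).
Qed.
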